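(* Let $X$ be a finite-dimensional real vector space of dimension greater than two, let $\mathcal{P}$ and $\mathcal{Q}$ be two convex bodies in $X$ which contain the origin as an interior point, and let $W\subset X$ be a $1$-dimensional subspace. If the dual body $\mathcal{P}^*$ is strictly convex and for every hyperplane (linear subspace of codimension one) $Y\subset X$ containing $W$ the convex bodies $(\mathcal{P}\cap Y)^*$ and $(\mathcal{Q}\cap Y)^*$ in $Y^*$ are translates of each other, then $\mathcal{P}^*$ and $\mathcal{Q}^*$ are translates of each other in $X^*$.
   Context: For a convex body $\mathcal{P}$ in a vector space $X$ containing the origin as an interior point, its dual is $\mathcal{P}^*=\{\boldsymbol\xi\in X^*:\boldsymbol\xi(\mathbf{v})\le1\text{ for all }\mathbf{v}\in\mathcal{P}\}$; for a subspace $Y$, $(\mathcal{P}\cap Y)^*\subset Y^*$ is the dual of $\mathcal{P}\cap Y$ taken within $Y$. *)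

From mathcomp Require Import all_boot all_algebra all_classical all_reals all_analysis.
Import GRing.Theory Num.Theory numFieldNormedType.Exports.
Set Implicit Arguments. Unset Strict Implicit. Unset Printing Implicit Defensive.
Local Open Scope classical_set_scope.
Local Open Scope ring_scope.

(* The space X is modelled as 'rV[R]_n (R : realType), and its dual X^dual is
   identified with 'rV[R]_n via the pairing  xi(v) = \sum_i xi_i v_i. *)
Definition pairing (R : realType) (n : nat) (xi v : 'rV[R]_n) : R :=
  \sum_(i < n) xi 0 i * v 0 i.

Definition convex_set (R : realType) (n : nat) (K : set 'rV[R]_n) : Prop :=
  forall x y t, K x -> K y -> 0 <= t <= 1 -> K ((1 - t) *: x + t *: y).

Definition convex_body (R : realType) (n : nat) (K : set 'rV[R]_n) : Prop :=
  convex_set K /\ compact K /\ (interior K !=set0).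

(* strictly convex: every open segment between distinct points lies in the interior
   (equivalently, the boundary contains no nondegenerate segment) *)
Definition strictly_convex (R : realType) (n : nat) (K : set 'rV[R]_n) : Prop :=
  forall x y t, K x -> K y -> x != y -> 0 < t < 1 ->
    interior K ((1 - t) *: x + t *: y).

Definition dual_body (R : realType) (n : nat) (P : set 'rV[R]_n) : set 'rV[R]_n :=
  [set xi | forall v, P v -> pairing xi v <= 1].

Definition translates (R : realType) (n : nat) (A B : set 'rV[R]_n) : Prop :=
  exists c : 'rV[R]_n, A = [set c + b | b in B].

(* For a subspace Y (row space of the matrix Y), functionals on Y are exactly the
   restrictions of functionals xi in X^dual.  [sub_dual_pre Y P] is the preimage of
   (P cap Y)^dual (subset of Y^dual) under the (surjective, linear) restriction map
   X^dual -> Y^dual. *)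
Definition sub_dual_pre (R : realType) (n : nat) (Y : 'M[R]_n) (P : set 'rV[R]_n)
  : set 'rV[R]_n :=
  [set xi | forall v, P v -> (v <= Y)%MS -> pairing xi v <= 1].

(* (P cap Y)^dual and (Q cap Y)^dual are translates of each other in Y^dual:
   there is eta0 in Y^dual (represented by a lift c in X^dual) such that, for every
   eta in Y^dual (represented by any lift xi), eta is in (P cap Y)^dual iff
   eta - eta0 is in (Q cap Y)^dual. *)
Definition sub_duals_translates (R : realType) (n : nat) (Y : 'M[R]_n)
  (P Q : set 'rV[R]_n) : Prop :=
  exists c : 'rV[R]_n, forall xi : 'rV[R]_n,
    sub_dual_pre Y P xi <-> sub_dual_pre Y Q (xi - c).

From Pilot Require Import Defs.
From mathcomp Require Import all_boot all_algebra all_classical all_reals all_analysis.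
From mathcomp Require Import ring lra.
Import order.Order.TTheory GRing.Theory Num.Theory numFieldNormedType.Exports.
Set Implicit Arguments. Unset Strict Implicit. Unset Printing Implicit Defensive.
Local Open Scope classical_set_scope.
Local Open Scope ring_scope.

(* The gauge g_K of a convex body K with 0 in its interior is sublinear, and it
   is the support function of K^*: xi lies in K^* iff xi <= g_K, and likewise
   (K cap Y)^* is cut out by g_K restricted to Y.  So the hypothesis says that
   f = g_P - g_Q agrees with a linear functional on every hyperplane through W;
   as dim X > 2, every plane through a fixed w spanning W lies in such a
   hyperplane, hence f is linear on all planes through w.  Strict convexity of
   P^* makes g_P differentiable at w: its one-sided directional derivative d_P
   at w is odd, hence linear.  The one-sided derivative of g_Q at w is then
   d_P - f, which is sublinear and odd, hence linear.  Thus f = <c, .> is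
   linear and P^* = Q^* + c.
   Supporting functionals of sublinear maps, used in place of Hahn-Banach, come
   from iterating one-sided directional derivatives along a basis. *)

Section Convexity.
Variables (R : realType) (n : nat).
Implicit Types (a b l t : R) (c d u v w x y z : 'rV[R]_n) (f p q : 'rV[R]_n -> R).
Implicit Types (P Q : set 'rV[R]_n) (Y : 'M[R]_n).

Lemma lb_le_infD (A B : set R) m : A !=set0 -> B !=set0 ->
  (forall a b, A a -> B b -> m <= a + b) -> m <= inf A + inf B.
Proof.
move=> A0 B0 h; suff : m - inf B <= inf A by lra.
apply: lb_le_inf A0 _ => a Aa; suff : m - a <= inf B by lra.
by apply: lb_le_inf B0 _ => b Bb; have := h a b Aa Bb; lra.
Qed.

Lemma interior_segment P x w : interior P x -> exists2 k : R, 0 < k & P (x + k *: w).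
Proof.
move=> Px; have hc : (fun k : R => x + k *: w) @ 0 --> x + 0 *: w.
  by apply: cvgD; [exact: cvg_cst | apply: cvgZr_tmp; exact: cvg_id].
rewrite scale0r addr0 in hc; have /nbhs_ballP [e e0 he] := hc _ Px.
exists (e / 2); first by rewrite divr_gt0.
apply: he; rewrite /ball /= sub0r normrN gtr0_norm ?divr_gt0 //.
by rewrite ltr_pdivrMr // ltr_pMr // ltr1n.
Qed.

Lemma pairingDr c x y : pairing c (x + y) = pairing c x + pairing c y.
Proof. by rewrite /pairing -big_split /=; apply: eq_bigr => i _; rewrite mxE mulrDr. Qed.

Lemma pairingZr c a x : pairing c (a *: x) = a * pairing c x.
Proof. by rewrite /pairing mulr_sumr; apply: eq_bigr => i _; rewrite mxE mulrCA. Qed.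

Lemma pairingNr c x : pairing c (- x) = - pairing c x.
Proof. by rewrite -scaleN1r pairingZr mulN1r. Qed.

Lemma pairingC c x : pairing c x = pairing x c.
Proof. by apply: eq_bigr => i _; rewrite mulrC. Qed.

Lemma pairingDl c d x : pairing (c + d) x = pairing c x + pairing d x.
Proof. by rewrite !(pairingC _ x) pairingDr. Qed.

Lemma pairingZl c a x : pairing (a *: c) x = a * pairing c x.
Proof. by rewrite !(pairingC _ x) pairingZr. Qed.

Lemma pairingBl c d x : pairing (c - d) x = pairing c x - pairing d x.
Proof. by rewrite pairingDl !(pairingC _ x) pairingNr. Qed.

Lemma pairing_gt0 x : x != 0 -> 0 < pairing x x.
Proof.
have sq_ge0 i : 0 <= x 0 i * x 0 i by rewrite -expr2 sqr_ge0.
move=> x0; rewrite lt_def sumr_ge0 // andbT; apply: contra x0 => /eqP x2.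
apply/eqP/rowP => i; rewrite mxE; apply/eqP.
by rewrite -[_ == 0]orbb -mulf_eq0 (psumr_eq0P (fun i _ => sq_ge0 i) x2).
Qed.

Definition sublinear q :=
  (forall a v, 0 < a -> q (a *: v) = a * q v) /\ (forall v w, q (v + w) <= q v + q w).

Lemma homogeneous_of_le f : (forall a v, 0 < a -> f (a *: v) <= a * f v) ->
  forall a v, 0 < a -> f (a *: v) = a * f v.
Proof.
move=> h a v a0; apply/eqP; rewrite eq_le h //= -ler_pdivlMl //.
have a'0 : 0 < a^-1 by rewrite invr_gt0.
by have := h a^-1 (a *: v) a'0; rewrite scalerA mulVf ?gt_eqF // scale1r.
Qed.

Lemma sublinear0 q : sublinear q -> q 0 = 0.
Proof. by move=> [hZ _]; have := hZ 2 0 (ltr0Sn _ 1); rewrite scaler0; lra. Qed.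

Lemma sublinearZ q a v : sublinear q -> 0 <= a -> q (a *: v) = a * q v.
Proof.
move=> hq; rewrite le_eqVlt => /predU1P [<-|]; last exact: hq.1.
by rewrite scale0r mul0r sublinear0.
Qed.

Lemma sublinear_addN_ge0 q v : sublinear q -> 0 <= q v + q (- v).
Proof. by move=> hq; rewrite -(sublinear0 hq) -{1}(addrN v); exact: hq.2. Qed.

Lemma sublinear_convex q x y a : sublinear q -> 0 <= a <= 1 ->
  q ((1 - a) *: x + a *: y) <= (1 - a) * q x + a * q y.
Proof.
move=> hq /andP [a0 a1].
by rewrite -(sublinearZ _ hq a0) -(sublinearZ _ hq) ?subr_ge0 //; exact: hq.2.
Qed.

Lemma sublinear_sum q (F : 'I_n -> 'rV[R]_n) :
  sublinear q -> q (\sum_i F i) <= \sum_i q (F i).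
Proof.
move=> hq; apply: (big_ind2 (fun v b => q v <= b)); first by rewrite sublinear0.
  by move=> v1 b1 v2 b2 h1 h2; apply: le_trans (hq.2 _ _) (lerD h1 h2).
by [].
Qed.

Lemma sublinearZ_odd q d a : sublinear q -> q d + q (- d) = 0 -> q (a *: d) = a * q d.
Proof.
move=> hq hd; have [a0|a0] := lerP 0 a; first exact: sublinearZ.
have -> : a *: d = (- a) *: (- d) by rewrite scalerN scaleNr opprK.
rewrite sublinearZ ?oppr_ge0 ?ltW //; have -> : q (- d) = - q d by lra.
by rewrite mulrNN.
Qed.

Lemma sublinear_oddE q : sublinear q -> (forall i, q 'e_i + q (- 'e_i) = 0) ->
  forall v, q v = pairing (\row_i q 'e_i) v.
Proof.
move=> hq he; have le_pairing v : q v <= pairing (\row_i q 'e_i) v.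
  have -> : pairing (\row_i q 'e_i) v = \sum_i q (v 0 i *: 'e_i).
    by apply: eq_bigr => i _; rewrite sublinearZ_odd // mxE mulrC.
  by rewrite {1}(row_sum_delta v); exact: sublinear_sum.
move=> v; apply/eqP; rewrite eq_le le_pairing /=.
by have := le_pairing (- v); rewrite pairingNr; have := sublinear_addN_ge0 v hq; lra.
Qed.

Definition diff_quot q x v t := (q (x + t *: v) - q x) / t.

Definition diff_quots q x v := [set diff_quot q x v t | t in [set t : R | 0 < t]].

Definition ddir q x v := inf (diff_quots q x v).

Lemma diff_quot_ge q x v t : sublinear q -> 0 < t -> - q (- v) <= diff_quot q x v t.
Proof.
move=> hq t0; rewrite /diff_quot ler_pdivlMr // mulNr.
have := hq.2 (x + t *: v) (t *: - v); rewrite (hq.1 _ _ t0) scalerN addrK; lra.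
Qed.

Lemma diff_quots_neq0 q x v : diff_quots q x v !=set0.
Proof. by exists (diff_quot q x v 1), 1 => //=; exact: ltr01. Qed.

Lemma ddir_le q x v t : sublinear q -> 0 < t -> ddir q x v <= diff_quot q x v t.
Proof.
move=> hq t0; apply: ge_inf; last by exists t.
by exists (- q (- v)) => _ [s s0 <-]; exact: diff_quot_ge.
Qed.

Lemma ddir_ge q x v m : (forall t, 0 < t -> m <= diff_quot q x v t) -> m <= ddir q x v.
Proof. by move=> h; apply: lb_le_inf (diff_quots_neq0 q x v) _ => _ [t t0 <-]; exact: h. Qed.

Lemma diff_quot_mono q x v s t : sublinear q -> 0 < s -> s <= t ->
  diff_quot q x v s <= diff_quot q x v t.
Proof.
move=> hq s0 st; have t0 := lt_le_trans s0 st.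
have r01 : 0 <= s / t <= 1.
  by apply/andP; split; [rewrite divr_ge0 // ltW | rewrite ler_pdivrMr // mul1r].
have := sublinear_convex x (x + t *: v) hq r01.
rewrite scalerDr scalerA divfK ?gt_eqF // addrA scalerBl scale1r subrK => h.
by rewrite /diff_quot ler_pdivrMr //; lra.
Qed.

Lemma ddir_le_self q x v : sublinear q -> ddir q x v <= q v.
Proof.
move=> hq; apply: le_trans (ddir_le x v hq ltr01) _.
by rewrite /diff_quot scale1r divr1; have := hq.2 x v; lra.
Qed.

Lemma ddir_opp_self q x : sublinear q -> ddir q x (- x) <= - q x.
Proof.
move=> hq; have h2 : 0 < (2 : R)^-1 by rewrite invr_gt0 ltr0Sn.
suff <- : diff_quot q x (- x) 2^-1 = - q x by exact: ddir_le.
rewrite /diff_quot scalerN -{1}[x]scale1r -scalerBl (hq.1 _ _ (_ : 0 < 1 - 2^-1)).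
  by field.
by rewrite subr_gt0 invf_lt1 ?ltr1n.
Qed.

Lemma ddirZ q x a v : sublinear q -> 0 < a -> ddir q x (a *: v) = a * ddir q x v.
Proof.
move=> hq; apply: homogeneous_of_le => {}a {}v a0.
rewrite -ler_pdivrMl //; apply: ddir_ge => t t0; rewrite ler_pdivrMl //.
apply: le_trans (ddir_le x (a *: v) hq (_ : 0 < t / a)) _; first by rewrite divr_gt0.
by rewrite /diff_quot scalerA divfK ?gt_eqF // invf_div mulrCA.
Qed.

Lemma diff_quot_mid q x v w s : sublinear q -> 0 < s ->
  diff_quot q x (v + w) (s / 2) <= diff_quot q x v s + diff_quot q x w s.
Proof.
move=> hq s0; have h2 : 0 <= (2 : R)^-1 <= 1.
  by rewrite invr_ge0 ler0n invf_le1 ?ltr0Sn ?ler1n.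
have := sublinear_convex (x + s *: v) (x + s *: w) hq h2.
have -> : (1 - 2^-1) *: (x + s *: v) + 2^-1 *: (x + s *: w) = x + s / 2 *: (v + w).
  by apply/rowP => j; rewrite !mxE; field.
rewrite /diff_quot => h; rewrite -mulrDl ler_pdivrMr ?divr_gt0 //.
have -> : (q (x + s *: v) - q x + (q (x + s *: w) - q x)) / s * (s / 2)
  = ((1 - 2^-1) * q (x + s *: v) + 2^-1 * q (x + s *: w) - q x) by field; rewrite gt_eqF.
lra.
Qed.

Lemma ddirD q x v w : sublinear q -> ddir q x (v + w) <= ddir q x v + ddir q x w.
Proof.
move=> hq; apply: lb_le_infD; try exact: diff_quots_neq0.
move=> _ _ [t1 t10 <-] [t2 t20 <-]; set s := Num.min t1 t2.
have s0 : 0 < s by rewrite lt_min t10.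
apply: le_trans (ddir_le x (v + w) hq (_ : 0 < s / 2)) _; first by rewrite divr_gt0.
apply: le_trans (diff_quot_mid x v w hq s0) _.
by apply: lerD; apply: diff_quot_mono => //; rewrite ge_min lexx ?orbT.
Qed.

Lemma sublinear_ddir q x : sublinear q -> sublinear (ddir q x).
Proof. by move=> hq; split => [a v a0|v w]; [exact: ddirZ | exact: ddirD]. Qed.

(* [ddir q d] is a sublinear minorant of [q] that is odd along [d]. *)
Lemma sublinear_odd_minorant (ds : seq 'rV[R]_n) q : sublinear q -> exists r,
  [/\ sublinear r, (forall v, r v <= q v) & forall d, d \in ds -> r d + r (- d) = 0].
Proof.
elim: ds q => [|d ds IH] q hq; first by exists q; split.
have [r [hr rle rds]] := IH _ (sublinear_ddir d hq).
exists r; split => // [v|e]; first exact: le_trans (rle v) (ddir_le_self _ _ hq).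
rewrite inE => /predU1P [->|/rds //].
have := rle d; have := rle (- d); have := ddir_le_self d d hq.
have := ddir_opp_self d hq; have := sublinear_addN_ge0 d hr; lra.
Qed.

Lemma sublinear_support q u : sublinear q ->
  exists c, (forall v, pairing c v <= q v) /\ pairing c u = q u.
Proof.
move=> hq; have [r [hr rle rodd]] :=
  sublinear_odd_minorant [seq 'e_i | i <- enum 'I_n] (sublinear_ddir u hq).
have rE := sublinear_oddE hr (fun i => rodd _ (map_f _ (mem_enum _ i))).
have rq v : r v <= q v := le_trans (rle v) (ddir_le_self _ _ hq).
exists (\row_i r 'e_i); split => [v|]; first by rewrite -rE.
apply/eqP; rewrite eq_le -rE rq /=.
have := rle (- u); have := ddir_opp_self u hq; rewrite !rE pairingNr; lra.
Qed.

Definition gauge_scales P v := [set l : R | 0 < l /\ P (l^-1 *: v)].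

Definition gauge P v := inf (gauge_scales P v).

Lemma gauge_le P v l : 0 < l -> P (l^-1 *: v) -> gauge P v <= l.
Proof. by move=> l0 Pl; apply: ge_inf => //; exists 0 => k [k0 _]; exact: ltW. Qed.

Lemma gauge_scales_neq0 P v : interior P 0 -> gauge_scales P v !=set0.
Proof.
move=> /(interior_segment v) [k k0]; rewrite add0r => Pk.
by exists k^-1; split; rewrite ?invr_gt0 ?invrK.
Qed.

Lemma gauge_le1 P v : P v -> gauge P v <= 1.
Proof. by move=> Pv; apply: gauge_le; rewrite ?ltr01 // invr1 scale1r. Qed.

Lemma gaugeZ P a v : interior P 0 -> 0 < a -> gauge P (a *: v) = a * gauge P v.
Proof.
move=> iP; apply: homogeneous_of_le => {}a {}v a0.
rewrite -ler_pdivrMl //; apply: lb_le_inf (gauge_scales_neq0 v iP) _ => l [l0 Pl].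
rewrite ler_pdivrMl //; apply: gauge_le; first exact: mulr_gt0.
by rewrite scalerA invfM mulrAC mulVf ?gt_eqF // mul1r.
Qed.

Lemma gaugeD P v w : Defs.convex_set P -> interior P 0 ->
  gauge P (v + w) <= gauge P v + gauge P w.
Proof.
move=> cP iP; apply: lb_le_infD; try exact: gauge_scales_neq0.
move=> a b [a0 Pa] [b0 Pb]; have ab0 := addr_gt0 a0 b0; apply: gauge_le => //.
have t01 : 0 <= b / (a + b) <= 1.
  apply/andP; split; first by rewrite divr_ge0 // ltW.
  by rewrite ler_pdivrMr // mul1r lerDr ltW.
have := cP _ _ _ Pa Pb t01.
have -> // : (1 - b / (a + b)) *: (a^-1 *: v) + b / (a + b) *: (b^-1 *: w)
    = (a + b)^-1 *: (v + w).
by apply/rowP => j; rewrite !mxE; field; rewrite !gt_eqF.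
Qed.

Lemma sublinear_gauge P : Defs.convex_set P -> interior P 0 -> sublinear (gauge P).
Proof. by move=> cP iP; split => [a v a0|v w]; [exact: gaugeZ | exact: gaugeD]. Qed.

Lemma sub_dual_preE P Y xi : interior P 0 ->
  sub_dual_pre Y P xi <-> forall v, (v <= Y)%MS -> pairing xi v <= gauge P v.
Proof.
move=> iP; split=> [h v vY | h p Pp pY]; last exact: le_trans (h p pY) (gauge_le1 Pp).
apply: lb_le_inf (gauge_scales_neq0 v iP) _ => l [l0 Pl].
by have := h _ Pl (scalemx_sub _ vY); rewrite pairingZr ler_pdivrMl // mulr1.
Qed.

Lemma dual_bodyE P xi : interior P 0 ->
  dual_body P xi <-> forall v, pairing xi v <= gauge P v.
Proof.
move=> iP; split=> [hxi v | h p Pp]; last exact: le_trans (h p) (gauge_le1 Pp).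
by apply: ((sub_dual_preE 1%:M xi iP).1 _ v (submx1 v)) => p Pp _; exact: hxi.
Qed.

Lemma dual_body_gauge_translate P Q c : interior P 0 -> interior Q 0 ->
  (forall v, gauge P v = gauge Q v + pairing c v) ->
  dual_body P = [set c + eta | eta in dual_body Q].
Proof.
move=> iP iQ hPQ; apply/seteqP; split=> [xi /(dual_bodyE _ iP) hxi|].
  exists (xi - c); last by rewrite addrC subrK.
  by apply/(dual_bodyE _ iQ) => v; rewrite pairingBl; have := hxi v; rewrite hPQ; lra.
move=> _ [eta /(dual_bodyE _ iQ) heta <-].
by apply/(dual_bodyE _ iP) => v; rewrite pairingDl hPQ; have := heta v; lra.
Qed.

Lemma gauge_sub_duals_translate P Q Y c v :
  Defs.convex_set P -> Defs.convex_set Q -> interior P 0 -> interior Q 0 ->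
  (forall xi, sub_dual_pre Y P xi <-> sub_dual_pre Y Q (xi - c)) -> (v <= Y)%MS ->
  gauge P v = gauge Q v + pairing c v.
Proof.
move=> cP cQ iP iQ hY vY.
have [xi [xiP xiv]] := sublinear_support v (sublinear_gauge cP iP).
have [eta [etaQ etav]] := sublinear_support v (sublinear_gauge cQ iQ).
have xiY : sub_dual_pre Y P xi by apply/(sub_dual_preE _ _ iP) => u _; exact: xiP.
have etaY : sub_dual_pre Y P (eta + c).
  by apply/hY; rewrite addrK; apply/(sub_dual_preE _ _ iQ) => u _; exact: etaQ.
have := (sub_dual_preE _ _ iQ).1 ((hY xi).1 xiY) v vY.
have := (sub_dual_preE _ _ iP).1 etaY v vY.
rewrite pairingBl xiv pairingDl etav; lra.
Qed.

Lemma ddir_gauge_odd P w : Defs.convex_set P -> interior P 0 -> w != 0 ->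
  strictly_convex (dual_body P) ->
  forall d, ddir (gauge P) w d + ddir (gauge P) w (- d) = 0.
Proof.
move=> cP iP w0 sc d; have hg := sublinear_gauge cP iP; have hr := sublinear_ddir w hg.
apply/eqP; rewrite eq_le sublinear_addN_ge0 // andbT leNgt; apply/negP => hpos.
have exposed c : (forall v, pairing c v <= ddir (gauge P) w v) ->
    dual_body P c /\ pairing c w = gauge P w.
  move=> cle; split.
    by apply/(dual_bodyE _ iP) => v; exact: le_trans (cle v) (ddir_le_self _ _ hg).
  apply/eqP; rewrite eq_le (le_trans (cle w) (ddir_le_self _ _ hg)) /=.
  by have := cle (- w); have := ddir_opp_self w hg; rewrite pairingNr; lra.
(* Supporting functionals of the derivative at d and at -d differ, yet both lie
   on the face of P^* exposed by w; their midpoint is interior to P^*, so it can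
   be pushed along w beyond that face. *)
have [c1 [c1le c1d]] := sublinear_support d hr.
have [c2 [c2le c2d]] := sublinear_support (- d) hr.
have [P1 c1w] := exposed _ c1le; have [P2 c2w] := exposed _ c2le.
have c12 : c1 != c2.
  by apply: contraTneq hpos => e; rewrite -c1d -c2d -e pairingNr addrN ltxx.
have half : 0 < (2 : R)^-1 < 1 by rewrite invr_gt0 ltr0Sn invf_lt1 ?ltr0Sn ?ltr1n.
have /(interior_segment w) [k k0] := sc _ _ _ P1 P2 c12 half.
move=> /(dual_bodyE _ iP) /(_ w); rewrite !pairingDl !pairingZl c1w c2w.
by have := mulr_gt0 k0 (pairing_gt0 w0); lra.
Qed.

Definition linear_on_planes_through w f :=
  forall z a b, f (a *: w + b *: z) = a * f w + b * f z.

Lemma ddir_shift p q x v m : sublinear p -> sublinear q ->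
  (forall t, 0 < t -> diff_quot q x v t = diff_quot p x v t - m) ->
  ddir q x v = ddir p x v - m.
Proof.
move=> hp hq h; apply/eqP; rewrite eq_le; apply/andP; split.
  rewrite lerBrDr; apply: ddir_ge => t t0; rewrite -lerBrDr -h //; exact: ddir_le.
by apply: ddir_ge => t t0; rewrite h // lerD2r; exact: ddir_le.
Qed.

Lemma sublinear_diff_pairing p q w : sublinear p -> sublinear q ->
  (forall d, ddir p w d + ddir p w (- d) = 0) ->
  linear_on_planes_through w (fun v => p v - q v) ->
  exists c, forall v, p v = q v + pairing c v.
Proof.
move=> hp hq podd hf.
have fN z : p (- z) - q (- z) = - (p z - q z).
  by have := hf z 0 (-1); rewrite scale0r add0r scaleN1r mul0r add0r mulN1r.
(* p - q is affine on each line through w, so the difference quotients of p and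
   q at w differ by a constant. *)
have qdd z : ddir q w z = ddir p w z - (p z - q z).
  apply: ddir_shift => // t t0; have := hf z 1 t; rewrite scale1r mul1r /diff_quot => e.
  have -> : q (w + t *: z) = p (w + t *: z) - p w + q w - t * (p z - q z) by lra.
  by field; rewrite gt_eqF.
have qodd z : ddir q w z + ddir q w (- z) = 0 by rewrite !qdd fN; have := podd z; lra.
have pE := sublinear_oddE (sublinear_ddir w hp) (fun i => podd 'e_i).
have qE := sublinear_oddE (sublinear_ddir w hq) (fun i => qodd 'e_i).
exists (\row_i ddir p w 'e_i - \row_i ddir q w 'e_i) => v.
by have := qdd v; rewrite (pE v) (qE v) pairingBl; lra.
Qed.

Lemma hyperplane_containing m (A : 'M[R]_(m, n)) : (\rank A < n)%N ->
  exists Y : 'M[R]_n, \rank Y = n.-1 /\ (A <= Y)%MS.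
Proof.
move=> rA; set b := nz_row (kermx A^T).
have b0 : b != 0 by rewrite nz_row_eq0 -mxrank_eq0 mxrank_ker mxrank_tr subn_eq0 -ltnNge.
have bA : b *m A^T = 0 by apply/sub_kermxP; exact: nz_row_sub.
exists (kermx b^T); split; first by rewrite mxrank_ker mxrank_tr rank_rV b0 subn1.
by apply/sub_kermxP; rewrite -[A *m _]trmxK trmx_mul trmxK bA trmx0.
Qed.

Lemma rank1_spanning_row (W : 'M[R]_n) :
  \rank W = 1%N -> exists2 w : 'rV[R]_n, w != 0 & (W <= w)%MS.
Proof.
move=> rW; have w0 : nz_row W != 0 by rewrite nz_row_eq0 -mxrank_eq0 rW.
exists (nz_row W) => //.
by rewrite -(mxrank_leqif_sup (nz_row_sub W)).2 rank_rV w0 rW.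
Qed.

End Convexity.

Unset Implicit Arguments.

Theorem theorem4p5 (R : realType) (n : nat) (P Q : set 'rV[R]_n) (W : 'M[R]_n) :
  (2 < n)%N ->
  convex_body P -> convex_body Q ->
  interior P 0 -> interior Q 0 ->
  \rank W = 1%N ->
  strictly_convex (dual_body P) ->
  (forall Y : 'M[R]_n, \rank Y = n.-1 -> (W <= Y)%MS ->
     sub_duals_translates Y P Q) ->
  translates (dual_body P) (dual_body Q).
Proof.
move=> n2 [cP _] [cQ _] iP iQ rW sc hyp.
have [w w0 Ww] := rank1_spanning_row rW.
have hf : linear_on_planes_through w (fun v => gauge P v - gauge Q v).
  move=> z a b.
  have [Y [rY]] :=
    hyperplane_containing (leq_ltn_trans (rank_leq_row (col_mx w z)) n2).
  rewrite col_mx_sub => /andP [wY zY].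
  have [c hc] := hyp Y rY (submx_trans Ww wY).
  have onY v : (v <= Y)%MS -> gauge P v - gauge Q v = pairing c v.
    by move=> vY; rewrite (gauge_sub_duals_translate cP cQ iP iQ hc vY) addrAC subrr add0r.
  have wzY := addmx_sub (scalemx_sub a wY) (scalemx_sub b zY).
  by rewrite !onY // pairingDr !pairingZr.
have [c hc] := sublinear_diff_pairing (sublinear_gauge cP iP) (sublinear_gauge cQ iQ)
  (ddir_gauge_odd cP iP w0 sc) hf.
by exists c; exact: dual_body_gauge_translate.
Qed.
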